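(* Let $\rho_0>0$, $n\in\mathbb{N}$, $y_0\in\mathbb{R}^n$, and let $f:\mathbb{R}_{>0}\times\mathbb{C}^n\to\mathbb{C}^n$ be continuous. Assume there is $c\geq0$ such that $|f(t,y_1)-f(t,y_2)|\leq c|y_1-y_2|$ for all $y_1,y_2\in\mathbb{C}^n$ and $t>0$, and that $(t\mapsto f(t,0))\in L^2_{\rho_0}(\mathbb{R}_{>0};\mathbb{C}^n)$. Define $\tilde f:\mathbb{R}\times\mathbb{C}^n\to\mathbb{C}^n$ by $\tilde f(t,y):=f(t,y)$ if $t>0$ and $\tilde f(t,y):=0$ otherwise. Then the mapping $F:C_c^\infty(\mathbb{R};\mathbb{C}^n)\to C(\mathbb{R};\mathbb{C}^n)$, $F(\varphi)(t):=\tilde f(t,\varphi(t)+y_0)$, is eventually $(0,0)$-Lipschitz continuous.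
   Context: For $\rho\in\mathbb{R}$, $L^2_\rho(\mathbb{R};\mathbb{C}^n)$ is the space of measurable $g$ with $\int|g(t)|^2e^{-2\rho t}dt<\infty$ (similarly on $\mathbb{R}_{>0}$); this coincides with the space $H^0_\rho(\mathbb{R};\mathbb{C}^n)$ with norm $\|\cdot\|_{\rho,0}=\|\cdot\|_{L^2_\rho}$. Definition: a map $F$ defined on a domain containing $C_c^\infty(\mathbb{R};\mathbb{C}^n)$ is eventually $(0,0)$-Lipschitz continuous if there is $\nu\geq\rho_0$ such that for each $\rho\geq\nu$, $F$ takes values in $L^2_\rho(\mathbb{R};\mathbb{C}^n)$ and has a Lipschitz continuous extension $F_\rho:L^2_\rho(\mathbb{R};\mathbb{C}^n)\to L^2_\rho(\mathbb{R};\mathbb{C}^n)$ with $\sup_{\rho\geq\nu}|F_\rho|_{\mathrm{Lip}}<\infty$. *)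

From HB Require Import structures.
From mathcomp Require Import all_boot all_order all_algebra.
From mathcomp Require Import all_classical all_reals all_analysis.
From mathcomp Require Import complex.
Set Implicit Arguments. Unset Strict Implicit. Unset Printing Implicit Defensive.
Import Order.TTheory GRing.Theory Num.Theory.
Local Open Scope ring_scope.
Local Open Scope classical_set_scope.

(* C^n is modelled as row vectors 'rV[R[i]]_n over the complex numbers R[i]
   (R : realType, complex numbers from mathcomp-real-closed). *)

Definition cnorm {R : realType} {n : nat} (v : 'rV[R[i]]_n) : R :=
  Num.sqrt (\sum_(i < n) ((complex.Re (v 0 i)) ^+ 2 + (complex.Im (v 0 i)) ^+ 2)).

Definition real_to_cvec {R : realType} {n : nat} (y : 'rV[R]_n) : 'rV[R[i]]_n :=
  map_mx (fun x => real_complex R x) y.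

Definition cmeasurable {R : realType} {n : nat} (D : set R)
  (g : R -> 'rV[R[i]]_n) : Prop :=
  forall i : 'I_n, measurable_fun D (fun t => complex.Re (g t 0 i)) /\
                   measurable_fun D (fun t => complex.Im (g t 0 i)).

Definition L2w_int {R : realType} {n : nat} (D : set R) (rho : R)
  (g : R -> 'rV[R[i]]_n) : \bar R :=
  (\int[lebesgue_measure]_(t in D) ((cnorm (g t)) ^+ 2 * expR (- (2 * rho * t)))%:E)%E.

Definition inL2w {R : realType} {n : nat} (D : set R) (rho : R)
  (g : R -> 'rV[R[i]]_n) : Prop :=
  cmeasurable D g /\ (L2w_int D rho g < +oo)%E.

Definition L2norm {R : realType} {n : nat} (rho : R) (g : R -> 'rV[R[i]]_n) : R :=
  Num.sqrt (fine (L2w_int setT rho g)).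

Definition smoothR {R : realType} (g : R -> R) : Prop :=
  forall (k : nat) (x : R), derivable (derive1n k g) x 1.

Definition Cc_infty {R : realType} {n : nat} (phi : R -> 'rV[R[i]]_n) : Prop :=
  (forall i : 'I_n, smoothR (fun t => complex.Re (phi t 0 i)) /\
                    smoothR (fun t => complex.Im (phi t 0 i))) /\
  exists M : R, forall t : R, M < `|t| -> phi t = 0.

Definition eventually_00_Lipschitz {R : realType} {n : nat} (rho0 : R)
  (F : (R -> 'rV[R[i]]_n) -> (R -> 'rV[R[i]]_n)) : Prop :=
  exists nu : R, rho0 <= nu /\
  exists L : R, forall rho : R, nu <= rho ->
    (forall phi, Cc_infty phi -> inL2w setT rho (F phi)) /\
    exists Frho : (R -> 'rV[R[i]]_n) -> (R -> 'rV[R[i]]_n),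
      (forall u, inL2w setT rho u -> inL2w setT rho (Frho u)) /\
      (forall phi, Cc_infty phi ->
         {ae lebesgue_measure, forall t, Frho phi t = F phi t}) /\
      (forall u v, inL2w setT rho u -> inL2w setT rho v ->
         L2norm rho (Frho u \- Frho v) <= L * L2norm rho (u \- v)).

From HB Require Import structures.
From mathcomp Require Import all_boot all_order all_algebra.
From mathcomp Require Import all_classical all_reals all_analysis.
From mathcomp Require Import complex.
From mathcomp Require Import lra.
From mathcomp Require Import measurable_realfun exponential_distribution.
Import Order.TTheory GRing.Theory Num.Theory.
Import numFieldNormedType.Exports.
Local Open Scope ring_scope.
Local Open Scope classical_set_scope.

(* Extend f by zero to t <= 0 (call it ftilde); the operator
   F(u)(t) = ftilde(t, u(t) + y0) is then given by the same formula on all of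
   L^2_rho, rho >= rho0.  Pointwise, |F(u) - F(v)| <= c |u - v|, which yields
   the Lipschitz constant c uniformly in rho, and
   |F(u)|^2 <= 2 c^2 |u|^2 + 2 |ftilde(., y0)|^2, where ftilde(., y0) is
   dominated by c |y0| 1_{t > 0} and ftilde(., 0); the latter is in L^2_rho
   because e^{-2 rho t} <= e^{-2 rho0 t} for t > 0.  Measurability of
   t |-> ftilde(t, u(t)) (a Caratheodory function) follows by approximating u
   with countably-valued quantizations.  Test functions are continuous with
   compact support, hence lie in every L^2_rho. *)

Definition reim {R : realType} (b : bool) (z : R[i]) : R :=
  if b then complex.Re z else complex.Im z.

Lemma reimD {R : realType} b (x y : R[i]) : reim b (x + y) = reim b x + reim b y.
Proof. by case: b; case: x => ? ?; case: y. Qed.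

Lemma reimN {R : realType} b (x : R[i]) : reim b (- x) = - reim b x.
Proof. by case: b; case: x. Qed.

Lemma reimB {R : realType} b (x y : R[i]) : reim b (x - y) = reim b x - reim b y.
Proof. by rewrite reimD reimN. Qed.

Lemma reim0 {R : realType} b : reim b (0 : R[i]) = 0.
Proof. by case: b. Qed.

Section complex_norm.
Context {R : realType} {n : nat}.
Implicit Types (u v : 'rV[R[i]]_n).

Definition cnorm2 v : R := \sum_(j < n) \sum_(b : bool) reim b (v 0 j) ^+ 2.

Lemma sqr_cnorm v : cnorm v ^+ 2 = cnorm2 v.
Proof.
rewrite sqr_sqrtr; last by apply: sumr_ge0 => j _; rewrite addr_ge0 ?sqr_ge0.
by rewrite /cnorm2; apply: eq_bigr => j _; rewrite big_bool.
Qed.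

Lemma cnorm_ge0 v : 0 <= cnorm v.
Proof. exact: sqrtr_ge0. Qed.

Lemma cnorm0 : cnorm (0 : 'rV[R[i]]_n) = 0.
Proof.
apply/eqP; rewrite -sqrf_eq0 sqr_cnorm; apply/eqP.
by rewrite /cnorm2 big1 // => j _; rewrite big1 // => b _; rewrite mxE reim0 expr0n.
Qed.

Lemma reim_le_cnorm b v j : `|reim b (v 0 j)| <= cnorm v.
Proof.
rewrite -(ler_pXn2r (_ : 0 < 2)%N) ?nnegrE ?cnorm_ge0 // real_normK ?num_real //.
rewrite sqr_cnorm /cnorm2 (bigD1 j) //= (bigD1 b) //= -addrA lerDl.
rewrite addr_ge0 //; apply: sumr_ge0 => ? _; first exact: sqr_ge0.
by apply: sumr_ge0 => ? _; exact: sqr_ge0.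
Qed.

Lemma cnorm2D_le u v : cnorm2 (u + v) <= 2 * cnorm2 u + 2 * cnorm2 v.
Proof.
rewrite /cnorm2 !mulr_sumr -big_split /=; apply: ler_sum => j _.
rewrite !mulr_sumr -big_split /=; apply: ler_sum => b _.
rewrite mxE reimD; set x := reim b _; set y := reim b _.
by have := sqr_ge0 (x - y); nra.
Qed.

Lemma cnorm2N v : cnorm2 (- v) = cnorm2 v.
Proof.
by apply: eq_bigr => j _; apply: eq_bigr => b _; rewrite mxE reimN sqrrN.
Qed.

Lemma sqr_cnorm_le_shift (c : R) (x x0 d : 'rV[R[i]]_n) : 0 <= c ->
  cnorm (x - x0) <= c * cnorm d ->
  cnorm x ^+ 2 <= 2 * c ^+ 2 * cnorm d ^+ 2 + 2 * cnorm x0 ^+ 2.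
Proof.
move=> c0 le_x; rewrite -{1}(subrK x0 x) sqr_cnorm.
apply: le_trans (cnorm2D_le _ _) _; rewrite -!sqr_cnorm -mulrA -exprMn lerD2r.
by rewrite ler_pM2l // ler_pXn2r ?nnegrE ?mulr_ge0 ?cnorm_ge0.
Qed.

End complex_norm.

Section complex_measurable.
Context {R : realType} {n : nat}.
Implicit Types (D : set R) (g u v : R -> 'rV[R[i]]_n).

Lemma cmeasurableP D g :
  cmeasurable D g <-> forall j b, measurable_fun D (fun t => reim b (g t 0 j)).
Proof.
split=> [mg j [] | mg j]; [exact: (mg j).1 | exact: (mg j).2 |].
by split; [exact: (mg j true) | exact: (mg j false)].
Qed.

Lemma cmeasurable_cst D (y : 'rV[R[i]]_n) : cmeasurable D (fun=> y).
Proof. by move=> j; split; exact: measurable_cst. Qed.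

Lemma cmeasurableD D u v : cmeasurable D u -> cmeasurable D v ->
  cmeasurable D (u \+ v).
Proof.
move=> /cmeasurableP mu /cmeasurableP mv; apply/cmeasurableP => j b.
under eq_fun do rewrite mxE reimD.
exact: measurable_funD.
Qed.

Lemma cmeasurableB D u v : cmeasurable D u -> cmeasurable D v ->
  cmeasurable D (u \- v).
Proof.
move=> /cmeasurableP mu /cmeasurableP mv; apply/cmeasurableP => j b.
under eq_fun do rewrite !mxE reimB.
exact: measurable_funB.
Qed.

Lemma measurable_cnorm2 D g : cmeasurable D g ->
  measurable_fun D (fun t => cnorm2 (g t)).
Proof.
move=> /cmeasurableP mg; apply: measurable_sum => j.
by apply: measurable_sum => b; exact: measurable_funX.
Qed.

Lemma cmeasurable_pos_ext g : cmeasurable `]0, +oo[ g ->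
  cmeasurable setT (fun t => if 0 < t then g t else 0).
Proof.
move=> /cmeasurableP mg; apply/cmeasurableP => j b.
rewrite (_ : (fun t => _) = (fun t => reim b (g t 0 j)) \_ `]0, +oo[).
  by apply/(measurable_restrictT _ _).1.
apply/funext => t; rewrite patchE mem_setE in_itv /= andbT.
by case: ifP => // _; rewrite mxE reim0.
Qed.

End complex_measurable.

Lemma measurable_fun_countable_index {d d'} {T : measurableType d}
    {U : measurableType d'} (I : countType) (q : T -> I) (G : T -> I -> U) :
  (forall z, measurable (q @^-1` [set z])) ->
  (forall z, measurable_fun setT (G ^~ z)) ->
  measurable_fun setT (fun t => G t (q t)).
Proof.
move=> mq mG _ Y mY; rewrite setTI.
have -> : (fun t => G t (q t)) @^-1` Y =
    \bigcup_z (q @^-1` [set z] `&` (G ^~ z) @^-1` Y).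
  by apply/seteqP; split=> [t Yt | t [z _ [/= <-]]] //; exists (q t).
apply: countable_bigcupT_measurable => // z; apply: measurableI => //.
by rewrite -[X in measurable X]setTI; exact: mG.
Qed.

Lemma measurable_floor_eq {R : realType} (g : R -> R) (m : int) :
  measurable_fun setT g -> measurable [set t | Num.floor (g t) = m].
Proof.
move=> mg; rewrite -[X in measurable X]setTI.
have -> : [set t | Num.floor (g t) = m] = g @^-1` `[m%:~R, (m + 1)%:~R[.
  by apply/seteqP; split=> t /=; rewrite in_itv /= -floor_eq => /eqP.
exact: mg.
Qed.

Section quantization.
Context {R : realType} {n : nat}.
Implicit Types (k : nat) (v : 'rV[R[i]]_n).

Local Notation scale k := (k.+1%:R : R).

Definition quant_index k v : {ffun 'I_n * bool -> int} :=
  [ffun jb => Num.floor (scale k * reim jb.2 (v 0 jb.1))].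

Definition quant_vec k (z : {ffun 'I_n * bool -> int}) : 'rV[R[i]]_n :=
  \row_j Complex ((z (j, true))%:~R / scale k) ((z (j, false))%:~R / scale k).

Definition quantize k v := quant_vec k (quant_index k v).

Lemma reim_quantize k v j b :
  reim b (quantize k v 0 j) = (Num.floor (scale k * reim b (v 0 j)))%:~R / scale k.
Proof. by rewrite mxE !ffunE; case: b. Qed.

Lemma quantize_err k v j b :
  0 <= reim b ((v - quantize k v) 0 j) < (scale k)^-1.
Proof.
have K0 : 0 < scale k by [].
rewrite mxE [_ (- _) 0 j]mxE reimB reim_quantize.
set x := reim b (v 0 j); set m := Num.floor (scale k * x).
have -> : x - m%:~R / scale k = (scale k * x - m%:~R) / scale k.
  by rewrite mulrBl mulrAC divff ?mul1r // gt_eqF.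
have /andP[le_m lt_m1] := floor_itv (scale k * x); rewrite intrD -/m in le_m lt_m1.
apply/andP; split; first by apply: divr_ge0; rewrite ?subr_ge0 // ltW.
by rewrite -[ltRHS]mul1r ltr_pM2r ?invr_gt0 // ltrBlDl.
Qed.

Lemma cnorm2_quantize_err k v : cnorm2 (v - quantize k v) <= (2 * n)%:R / scale k.
Proof.
have Ki1 : (scale k)^-1 <= 1 by rewrite invf_le1 // ler1n.
apply: (@le_trans _ _ (\sum_(j < n) \sum_(b : bool) (scale k)^-1)).
  apply: ler_sum => j _; apply: ler_sum => b _.
  have /andP[d0 d1] := quantize_err k v j b; rewrite expr2.
  by apply: le_trans (ltW d1); rewrite ler_piMl //; apply: le_trans (ltW d1) Ki1.
under eq_bigr do rewrite big_bool /=.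
by rewrite sumr_const card_ord -mulr2n -mulrnA mulr_natl.
Qed.

Lemma quantize_cvg v e : 0 < e ->
  \forall k \near \oo, cnorm (v - quantize k v) < e.
Proof.
move=> e0; near=> k.
rewrite -(ltr_pXn2r (_ : 0 < 2)%N) ?nnegrE ?cnorm_ge0 ?ltW // sqr_cnorm.
apply: le_lt_trans (cnorm2_quantize_err k v) _.
rewrite ltr_pdivrMr // -ltr_pdivrMl ?exprn_gt0 // mulrC.
apply: (@lt_trans _ _ k%:R); last by rewrite ltr_nat.
by near: k; exact: nbhs_infty_gtr.
Unshelve. all: by end_near.
Qed.

Lemma measurable_quant_index k (w : R -> 'rV[R[i]]_n) : cmeasurable setT w ->
  forall z, measurable ((quant_index k \o w) @^-1` [set z]).
Proof.
move=> /cmeasurableP mw z.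
have -> : (quant_index k \o w) @^-1` [set z] =
    \bigcap_(jb in setT) [set t | Num.floor (scale k * reim jb.2 (w t 0 jb.1)) = z jb].
  apply/seteqP; split=> [t /= <- jb _ | t /= zw]; first by rewrite ffunE.
  by apply/ffunP => jb; rewrite ffunE zw.
apply: fin_bigcap_measurable => // -[j b] _; apply: measurable_floor_eq.
by apply: measurable_funM => //; exact: mw.
Qed.

Lemma cmeasurable_comp_lipschitz (H : R -> 'rV[R[i]]_n -> 'rV[R[i]]_n) (c : R)
    (w : R -> 'rV[R[i]]_n) : 0 <= c ->
  (forall y, cmeasurable setT (H ^~ y)) ->
  (forall t y1 y2, cnorm (H t y1 - H t y2) <= c * cnorm (y1 - y2)) ->
  cmeasurable setT w -> cmeasurable setT (fun t => H t (w t)).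
Proof.
move=> c0 mH lipH mw; apply/cmeasurableP => j b.
apply: (@measurable_fun_cvg _ _ _ _
  (fun k t => reim b (H t (quant_vec k ((quant_index k \o w) t)) 0 j))).
  move=> k; apply: (@measurable_fun_countable_index _ _ R R _ (quant_index k \o w)
    (fun t z => reim b (H t (quant_vec k z) 0 j))) => [|z].
    exact: measurable_quant_index.
  exact: (cmeasurableP _ _).1 (mH _) j b.
move=> t _; apply/cvgrPdist_lt => e e0.
have ec0 : 0 < e / (c + 1) by rewrite divr_gt0 // ltr_wpDl.
near=> k.
have lt_q : cnorm (w t - quantize k (w t)) < e / (c + 1).
  by near: k; exact: quantize_cvg.
rewrite -reimB (_ : _ - _ = (H t (w t) - H t (quantize k (w t))) 0 j);
  last by rewrite !mxE.
apply: le_lt_trans (reim_le_cnorm _ _ _) _; apply: le_lt_trans (lipH _ _ _) _.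
rewrite ltr_pdivlMr ?ltr_wpDl // in lt_q.
by apply: le_lt_trans lt_q; rewrite mulrC ler_wpM2l ?cnorm_ge0 // lerDl.
Unshelve. all: by end_near.
Qed.

End quantization.

Section weighted_L2.
Context {R : realType} {n : nat}.
Local Notation mu := (@lebesgue_measure R).
Implicit Types (rho : R) (D : set R) (g h u v : R -> 'rV[R[i]]_n).

Definition wsqr rho g t : R := cnorm (g t) ^+ 2 * expR (- (2 * rho * t)).

Lemma wsqr_ge0 rho g t : 0 <= wsqr rho g t.
Proof. by rewrite mulr_ge0 ?sqr_ge0 ?expR_ge0. Qed.

Lemma L2normE rho g : L2norm rho g = Num.sqrt (\int[mu]_(t in setT) wsqr rho g t).
Proof. by []. Qed.

Lemma integrableZl_EFin (a : R) {k : R -> R} :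
  mu.-integrable setT (EFin \o k) -> mu.-integrable setT (EFin \o (fun t => a * k t)).
Proof.
move=> ik; have := integrableZl measurableT a ik.
by apply: eq_integrable => // t _; rewrite /= EFinM.
Qed.

Lemma measurable_wsqr rho D g : cmeasurable D g -> measurable_fun D (wsqr rho g).
Proof.
move=> mg; apply: measurable_funM.
  by under eq_fun do rewrite sqr_cnorm; exact: measurable_cnorm2.
by apply: measurableT_comp => //; apply: measurable_funN; exact: measurable_funM.
Qed.

Lemma inL2wE rho D g : measurable D ->
  inL2w D rho g <-> cmeasurable D g /\ mu.-integrable D (EFin \o wsqr rho g).
Proof.
move=> mD; have abs_wsqr t : `|(wsqr rho g t)%:E|%E = (wsqr rho g t)%:E.
  by rewrite abse_EFin ger0_norm ?wsqr_ge0.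
split=> [[mg fin] | [mg /integrableP[_ fin]]]; split => //.
  apply/integrableP; split; first by apply/measurable_EFinP; exact: measurable_wsqr.
  by under eq_integral do rewrite abs_wsqr.
by move: fin; under eq_integral do rewrite abs_wsqr.
Qed.

Lemma inL2w_le rho (a b : R) g h1 h2 : cmeasurable setT g ->
  inL2w setT rho h1 -> inL2w setT rho h2 ->
  (forall t, cnorm (g t) ^+ 2 <= a * cnorm (h1 t) ^+ 2 + b * cnorm (h2 t) ^+ 2) ->
  inL2w setT rho g.
Proof.
move=> mg /inL2wE[//|_ ih1] /inL2wE[//|_ ih2] le_g; apply/inL2wE => //; split => //.
apply: (le_integrable measurableT _ _
  (integrableD measurableT (integrableZl_EFin a ih1) (integrableZl_EFin b ih2))).
  by apply/measurable_EFinP; exact: measurable_wsqr.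
move=> t _; rewrite /= lee_fin ger0_norm ?wsqr_ge0 //.
apply: le_trans (ler_norm _); rewrite /wsqr [a * _]mulrA [b * _]mulrA -mulrDl.
by apply: ler_wpM2r; [exact: expR_ge0 | exact: le_g].
Qed.

Lemma inL2wB rho u v : inL2w setT rho u -> inL2w setT rho v ->
  inL2w setT rho (u \- v).
Proof.
move=> uL2 vL2; apply: (inL2w_le rho 2 2 _ _ _ _ uL2 vL2).
  exact: cmeasurableB uL2.1 vL2.1.
by move=> t; rewrite !sqr_cnorm -(cnorm2N (v t)); exact: cnorm2D_le.
Qed.

Lemma L2norm_le rho (c : R) g h : 0 <= c -> cmeasurable setT g ->
  inL2w setT rho h -> (forall t, cnorm (g t) <= c * cnorm (h t)) ->
  L2norm rho g <= c * L2norm rho h.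
Proof.
move=> c0 mg hL2 le_gh.
have le_sqr t : cnorm (g t) ^+ 2 <= c ^+ 2 * cnorm (h t) ^+ 2.
  by rewrite -exprMn ler_pXn2r ?nnegrE ?mulr_ge0 ?cnorm_ge0.
have /inL2wE[//|_ ig] : inL2w setT rho g.
  apply: (inL2w_le rho (c ^+ 2) 0 _ _ _ mg hL2 hL2) => t.
  by rewrite mul0r addr0.
have /inL2wE[//|_ ih] := hL2.
rewrite !L2normE -(ger0_norm c0) -sqrtr_sqr -sqrtrM ?sqr_ge0 // ler_sqrt; last first.
  by rewrite mulr_ge0 ?sqr_ge0 // Rintegral_ge0 // => t _; exact: wsqr_ge0.
rewrite -RintegralZl //; apply: le_Rintegral => //; first exact: integrableZl_EFin.
by move=> t _; rewrite /wsqr mulrA ler_wpM2r ?expR_ge0.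
Qed.

Lemma inL2w_pos_ext (rho0 rho : R) g : rho0 <= rho -> inL2w `]0, +oo[ rho0 g ->
  inL2w setT rho (fun t => if 0 < t then g t else 0).
Proof.
move=> le_rho /inL2wE[//|mg]; rewrite integrable_mkcond // => ig.
apply/inL2wE => //; split; first exact: cmeasurable_pos_ext.
apply: (le_integrable measurableT _ _ ig).
  by apply/measurable_EFinP; apply: measurable_wsqr; exact: cmeasurable_pos_ext.
move=> t _; rewrite patchE mem_setE in_itv /= andbT.
case: ifP => t0; last by rewrite /wsqr t0 cnorm0 expr0n /= mul0r normr0.
rewrite !abse_EFin lee_fin !ger0_norm ?wsqr_ge0 // /wsqr t0.
apply: ler_wpM2l; first exact: sqr_ge0.
by rewrite ler_expR lerN2 ler_pM2r // ler_pM2l.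
Qed.

Lemma inL2w_pos_cst rho (y : 'rV[R[i]]_n) : 0 < rho ->
  inL2w setT rho (fun t => if 0 < t then y else 0).
Proof.
move=> rho0; have rate0 : 0 < 2 * rho by rewrite mulr_gt0.
apply/inL2wE => //; split; first exact/cmeasurable_pos_ext/cmeasurable_cst.
(* on t > 0 the weight is (2 rho)^-1 times the exponential density of rate 2 rho *)
have /integrableZl_EFin := integrable_exponential_pdf rate0.
move=> /(_ (cnorm y ^+ 2 / (2 * rho))) /(le_integrable measurableT); apply.
  by apply/measurable_EFinP; apply: measurable_wsqr; apply/cmeasurable_pos_ext/cmeasurable_cst.
move=> t _; rewrite /= lee_fin ger0_norm ?wsqr_ge0 //.
apply: le_trans (ler_norm _); rewrite /wsqr; case: ifP => t0; last first.
  rewrite cnorm0 expr0n /= mul0r; apply: mulr_ge0; last exact/exponential_pdf_ge0/ltW.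
  by apply: divr_ge0; [exact: sqr_ge0 | exact: ltW].
by rewrite exponential_pdfE ?(ltW t0) // mulrA divfK ?gt_eqF // mulNr.
Qed.

Lemma Cc_infty_inL2w rho (phi : R -> 'rV[R[i]]_n) :
  Cc_infty phi -> inL2w setT rho phi.
Proof.
move=> [phi_smooth [M phi_supp]].
have cont_reim j b : continuous (fun t => reim b (phi t 0 j)).
  move=> t; have [sRe sIm] := phi_smooth j.
  by case: b; [move: (sRe 0%N t) | move: (sIm 0%N t)] =>
    /= /derivable1_diffP /differentiable_continuous.
have mphi : cmeasurable setT phi.
  by apply/cmeasurableP => j b; exact: continuous_measurable_fun.
apply/inL2wE => //; split => //.
have cont_cnorm2 : continuous (fun t => cnorm2 (phi t)).
  apply: continuous_big => [|j _]; first exact: add_continuous.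
  apply: continuous_big => [|b _]; first exact: add_continuous.
  move=> t; apply: (@continuous_comp _ _ _ (fun x => reim b (phi x 0 j))
    (fun x : R => x ^+ 2)); [exact: cont_reim | exact: exprn_continuous].
have cont_weight : continuous (fun t : R => expR (- (2 * rho * t))).
  move=> t; apply: continuous_comp; last exact: continuous_expR.
  by apply: cvgN; apply: cvgM; [exact: cvg_cst | exact: cvg_id].
have cont_wsqr : continuous (wsqr rho phi).
  have -> : wsqr rho phi = fun t => cnorm2 (phi t) * expR (- (2 * rho * t)).
    by apply/funext => t; rewrite /wsqr sqr_cnorm.
  by move=> t; apply: cvgM; [exact: cont_cnorm2 | exact: cont_weight].
have : mu.-integrable `[- M, M] (EFin \o wsqr rho phi).
  apply: continuous_compact_integrable; first exact: segment_compact.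
  exact: continuous_subspaceT.
rewrite integrable_mkcond //.
apply: eq_integrable => // t _; rewrite patchE mem_setE in_itv /=.
case: ifPn => // /negP tM; have phi0 : phi t = 0.
  by apply: phi_supp; rewrite ltNge ler_norml; apply/negP.
by rewrite /wsqr phi0 cnorm0 expr0n /= mul0r.
Qed.

End weighted_L2.

Section superposition.
Context {R : realType} {n : nat}.
Variables (f : R -> 'rV[R[i]]_n -> 'rV[R[i]]_n) (c rho0 rho : R).
Hypothesis f_cont : forall (t : R) (y : 'rV[R[i]]_n), 0 < t -> forall eps : R, 0 < eps ->
  exists2 delta : R, 0 < delta &
    forall (s : R) (z : 'rV[R[i]]_n), 0 < s -> `|s - t| < delta ->
      cnorm (z - y) < delta -> cnorm (f s z - f t y) < eps.
Hypothesis c_ge0 : 0 <= c.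
Hypothesis f_lip : forall (t : R) (y1 y2 : 'rV[R[i]]_n), 0 < t ->
  cnorm (f t y1 - f t y2) <= c * cnorm (y1 - y2).
Hypothesis f0_L2 : inL2w `]0, +oo[ rho0 (fun t => f t 0).
Hypothesis rho0_gt0 : 0 < rho0.
Hypothesis le_rho : rho0 <= rho.

Definition ftilde t y := if 0 < t then f t y else 0.

Lemma ftilde_lipschitz t y1 y2 : cnorm (ftilde t y1 - ftilde t y2) <= c * cnorm (y1 - y2).
Proof.
rewrite /ftilde; case: ifP => t0; first exact: f_lip.
by rewrite subrr cnorm0 mulr_ge0 ?cnorm_ge0.
Qed.

Lemma cmeasurable_ftilde y : cmeasurable setT (ftilde ^~ y).
Proof.
apply: cmeasurable_pos_ext; apply/cmeasurableP => j b.
apply: open_continuous_measurable_fun; first exact: interval_open.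
move=> t; rewrite inE /= in_itv /= andbT => t0; apply/cvgrPdist_lt => e e0.
have [d d0 near_f] := f_cont t y t0 e e0.
apply/nbhs_ballP; exists (Num.min d t); first by rewrite /= lt_min d0 t0.
move=> s; rewrite /ball /= lt_min => /andP[ts_d ts_t].
have s0 : 0 < s by move: ts_t; rewrite ltr_distlC subrr => /andP[].
rewrite distrC -reimB (_ : _ - _ = (f s y - f t y) 0 j); last by rewrite !mxE.
apply: le_lt_trans (reim_le_cnorm _ _ _) _.
by apply: near_f; rewrite // 1?distrC // subrr cnorm0.
Qed.

Lemma inL2w_ftilde y : inL2w setT rho (ftilde ^~ y).
Proof.
have rho_gt0 : 0 < rho := lt_le_trans rho0_gt0 le_rho.
apply: (inL2w_le rho (2 * c ^+ 2) 2 _ _ _ (cmeasurable_ftilde y)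
  (inL2w_pos_cst _ y rho_gt0) (inL2w_pos_ext _ _ _ le_rho f0_L2)) => t.
apply: sqr_cnorm_le_shift => //; rewrite /ftilde; case: ifP => t0.
  by rewrite -[y in c * cnorm y](subr0 y); exact: f_lip.
by rewrite subrr cnorm0 mulr_ge0 ?cnorm_ge0.
Qed.

Lemma inL2w_superposition y u : inL2w setT rho u ->
  inL2w setT rho (fun t => ftilde t (u t + y)).
Proof.
move=> uL2; apply: (inL2w_le rho (2 * c ^+ 2) 2 _ _ _ _ uL2 (inL2w_ftilde y)) => [|t].
  apply: (cmeasurable_comp_lipschitz _ _ _ c_ge0 cmeasurable_ftilde ftilde_lipschitz).
  exact: cmeasurableD uL2.1 (cmeasurable_cst _ _).
apply: sqr_cnorm_le_shift => //.
by have := ftilde_lipschitz t (u t + y) y; rewrite addrK.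
Qed.

Lemma superposition_lipschitz y u v : inL2w setT rho u -> inL2w setT rho v ->
  L2norm rho ((fun t => ftilde t (u t + y)) \- (fun t => ftilde t (v t + y)))
    <= c * L2norm rho (u \- v).
Proof.
move=> uL2 vL2; apply: L2norm_le => //; last 2 first.
- exact: inL2wB.
- move=> t /=; rewrite (_ : u t - v t = u t + y - (v t + y)).
    exact: ftilde_lipschitz.
  by rewrite opprD addrACA subrr addr0.
exact: cmeasurableB (inL2w_superposition y _ uL2).1 (inL2w_superposition y _ vL2).1.
Qed.

End superposition.

Theorem proposition6p1 (R : realType) (rho0 : R) (n : nat) (y0 : 'rV[R]_n)
  (f : R -> 'rV[R[i]]_n -> 'rV[R[i]]_n) :
  0 < rho0 ->
  (* f continuous on R_{>0} x C^n *)
  (forall (t : R) (y : 'rV[R[i]]_n), 0 < t -> forall eps : R, 0 < eps ->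
     exists2 delta : R, 0 < delta &
       forall (s : R) (z : 'rV[R[i]]_n), 0 < s -> `|s - t| < delta ->
         cnorm (z - y) < delta -> cnorm (f s z - f t y) < eps) ->
  (* uniform Lipschitz condition *)
  (exists2 c : R, 0 <= c &
     forall (t : R) (y1 y2 : 'rV[R[i]]_n), 0 < t ->
       cnorm (f t y1 - f t y2) <= c * cnorm (y1 - y2)) ->
  (* t |-> f(t,0) in L^2_rho0(R_{>0}; C^n) *)
  inL2w `]0, +oo[ rho0 (fun t => f t 0) ->
  eventually_00_Lipschitz rho0
    (fun (phi : R -> 'rV[R[i]]_n) (t : R) =>
       let ftilde := fun (s : R) (y : 'rV[R[i]]_n) => if 0 < s then f s y else 0 in
       ftilde t (phi t + real_to_cvec y0)).
Proof.
move=> rho0_gt0 f_cont [c c_ge0 f_lip] f0_L2.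
exists rho0; split => //; exists c => rho le_rho.
pose F (u : R -> 'rV[R[i]]_n) t := ftilde f t (u t + real_to_cvec y0).
have F_L2 u : inL2w setT rho u -> inL2w setT rho (F u).
  exact: (inL2w_superposition _ _ _ _ f_cont c_ge0 f_lip f0_L2 rho0_gt0 le_rho).
split=> [phi /(Cc_infty_inL2w rho) /F_L2 //|].
exists F; split=> //; split=> [phi _|u v uL2 vL2]; first exact: aeW.
exact: (superposition_lipschitz _ _ _ _ f_cont c_ge0 f_lip f0_L2 rho0_gt0 le_rho).
Qed.
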